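(* (1) Let $R\subseteq S$ be rings with $S$ a free left $R$-module on a basis $T_S$, let $\alpha$ be a ring automorphism of $S$ and $\delta$ an $\alpha$-derivation of $S$, and let $S[x;\alpha,\delta]$ be the Ore extension. Let $0\ne g\in S[x;\alpha,\delta]$ and $p=\operatorname{lc}_S(g)$. Suppose that $p$ is $R$-nice and $\operatorname{ann}_R(p)=\operatorname{ann}_R(g)$ (this holds in particular whenever $g$ is $R$-nice), and that $\operatorname{ann}_S(p)=S\operatorname{ann}_R(p)$. Then $\operatorname{ann}_{S[x;\alpha,\delta]}(g)=S[x;\alpha,\delta]\operatorname{ann}_R(g)$. (2) Let $\mathbb S=R[X;\boldsymbol\alpha,\boldsymbol\delta]$ be a skew polynomial ring of bijective type over a well-ordered set of variables. Then every $R$-nice element $g\in\mathbb S$ satisfies $\operatorname{ann}_{\mathbb S}(g)=\mathbb S\operatorname{ann}_R(g)$.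
   Context: All annihilators are left annihilators: $\operatorname{ann}_B(u)=\{b\in B: bu=0\}$. Ore extension: $S[x;\alpha,\delta]$ is the free left $S$-module with basis $\{x^n:n\in\mathbb N\}$ and multiplication determined by $xs=\alpha(s)x+\delta(s)$, where $\delta(ab)=\alpha(a)\delta(b)+\delta(a)b$. Each $f\in S[x;\alpha,\delta]$ is uniquely $f=\sum_k p_kx^k$ with $p_k\in S$; $\deg_x(f)$ is the largest $k$ with $p_k\ne0$ and $\operatorname{lc}_S(f)=p_{\deg_x f}$. $S[x;\alpha,\delta]$ is a free left $R$-module with basis $\{\lambda x^n:\lambda\in T_S,n\in\mathbb N\}$. A non-zero element $f$ of a ring that is a free left $R$-module with a fixed basis is $R$-nice if, writing $f=\sum_i a_i\lambda_i$ with distinct basis elements $\lambda_i$ and non-zero $a_i\in R$, all the $\operatorname{ann}_R(a_i)$ coincide. Setting (M) for part (2): $R$ a ring, $\Omega$ an ordinal, $X=\{x_s:s<\Omega\}$; $T_\kappa$ the standard terms $x_{s_1}\cdots x_{s_n}$ with $s_1\le\cdots\le s_n<\kappa$, $T=T_\Omega$; $\mathbb S$ has subrings $\mathbb S_\kappa$ ($\kappa\le\Omega$) with $\mathbb S_0=R$, $\mathbb S_\Omega=\mathbb S$, $\mathbb S_\kappa$ free as left $R$-module on $T_\kappa$, $\mathbb S_{\kappa+1}=\mathbb S_\kappa[x_\kappa;\alpha_\kappa,\delta_\kappa]$ an Ore extension with $\alpha_\kappa$ an automorphism of $\mathbb S_\kappa$ and $\delta_\kappa$ an $\alpha_\kappa$-derivation,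 and $\mathbb S_\kappa=\bigcup_{\eta<\kappa}\mathbb S_\eta$ for limit $\kappa$; $R$-niceness in $\mathbb S$ refers to the basis $T$. *)

(* All rings live inside one ambient ring A; subrings are
   Prop-valued predicates on A (R ⊆ S ⊆ A identified with their images). *)
From HB Require Import structures.
From mathcomp Require Import all_boot all_order all_algebra.
Set Implicit Arguments. Unset Strict Implicit. Unset Printing Implicit Defensive.
Import Order.TTheory GRing.Theory.
Local Open Scope ring_scope.

Section Defs.
Variable A : pzRingType.

Definition subring (X : A -> Prop) : Prop :=
  X 1 /\ (forall a b, X a -> X b -> X (a - b)) /\ (forall a b, X a -> X b -> X (a * b)).

Definition lcomb (l : seq (A * A)) : A := \sum_(p <- l) p.1 * p.2.

Definition free_on (R M T : A -> Prop) : Prop :=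
  (forall t, T t -> M t) /\
  (forall m, M m -> exists l : seq (A * A),
       (forall p, p \in l -> R p.1 /\ T p.2) /\ uniq (map snd l) /\ m = lcomb l) /\
  (forall l : seq (A * A),
       (forall p, p \in l -> R p.1 /\ T p.2) -> uniq (map snd l) ->
       lcomb l = 0 -> forall p, p \in l -> p.1 = 0).

Definition ann (X : A -> Prop) (u : A) : A -> Prop := fun b => X b /\ b * u = 0.

Definition lspan (B X : A -> Prop) : A -> Prop :=
  fun h => exists l : seq (A * A), (forall p, p \in l -> B p.1 /\ X p.2) /\ h = lcomb l.

Definition same_set (P Q : A -> Prop) : Prop := forall h, P h <-> Q h.

Definition nice (R T : A -> Prop) (f : A) : Prop :=
  f != 0 /\
  forall l : seq (A * A),
    (forall p, p \in l -> R p.1 /\ p.1 != 0 /\ T p.2) -> uniq (map snd l) ->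
    f = lcomb l ->
    forall p q, p \in l -> q \in l -> same_set (ann R p.1) (ann R q.1).

(* E = S[x; alpha, delta] (internal description): S, E subrings, S ⊆ E, x ∈ E,
   alpha a ring automorphism of S, delta an alpha-derivation of S,
   x s = alpha(s) x + delta(s), and E is the free left S-module on {x^n}. *)
Definition is_ore_ext (S E : A -> Prop) (x : A) (alpha delta : A -> A) : Prop :=
  subring S /\ subring E /\ (forall s, S s -> E s) /\ E x /\
  (forall s, S s -> S (alpha s)) /\
  (forall a b, S a -> S b -> alpha (a + b) = alpha a + alpha b) /\
  (forall a b, S a -> S b -> alpha (a * b) = alpha a * alpha b) /\
  alpha 1 = 1 /\
  (forall a b, S a -> S b -> alpha a = alpha b -> a = b) /\
  (forall b, S b -> exists a, S a /\ alpha a = b) /\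
  (forall s, S s -> S (delta s)) /\
  (forall a b, S a -> S b -> delta (a + b) = delta a + delta b) /\
  (forall a b, S a -> S b -> delta (a * b) = alpha a * delta b + delta a * b) /\
  (forall s, S s -> x * s = alpha s * x + delta s) /\
  (forall f, E f -> exists (n : nat) (q : nat -> A),
       (forall k, S (q k)) /\ f = \sum_(k < n) q k * x ^+ k) /\
  (forall (n : nat) (q : nat -> A), (forall k, S (q k)) ->
       \sum_(k < n) q k * x ^+ k = 0 -> forall k, (k < n)%N -> q k = 0).

Definition is_lc (S : A -> Prop) (x g p : A) : Prop :=
  exists (n : nat) (q : nat -> A), (forall k, S (q k)) /\
    g = \sum_(k < n.+1) q k * x ^+ k /\ q n != 0 /\ p = q n.

End Defs.

Definition std_terms (d : Order.disp_t) (I : orderType d) (A : pzRingType)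
  (xs : I -> A) (P : I -> Prop) : A -> Prop :=
  fun h => exists l : seq I, sorted (fun a b => (a <= b)%O) l /\
     (forall s, s \in l -> P s) /\ h = \prod_(s <- l) xs s.

From mathcomp Require Import all_boot all_order all_algebra.
Set Implicit Arguments. Unset Strict Implicit. Unset Printing Implicit Defensive.
Import Order.TTheory GRing.Theory.
Local Open Scope ring_scope.

(* (1) goes by induction on the x-degree of f with f g = 0. If c is the leading
   coefficient of f, of degree m, the top coefficient of f g is c alpha^m(p), so
   c = alpha^m(s) with s p = 0; hence s lies in S ann_R(g), and f - x^m s has
   smaller degree and still annihilates g.
   (2) goes by transfinite induction on the variables. Expanding an R-nice g of
   S_{k+1} = S_k[x_k] over T, the expansion of its leading coefficient p occurs
   inside that of g, so p is R-nice and ann_R(p) is contained in ann_R(g); the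
   hypothesis ann_S(p) = S ann_R(p) of (1) then holds by induction, since S_k is
   the union of R and the S_{j+1}, j < k. *)

Section Subring.
Variables (A : pzRingType) (S : A -> Prop).
Hypothesis sS : subring S.

Lemma subring1 : S 1. Proof. by case: sS. Qed.
Lemma subringB a b : S a -> S b -> S (a - b). Proof. by case: sS => _ [+ _]; apply. Qed.
Lemma subringM a b : S a -> S b -> S (a * b). Proof. by case: sS => _ [_]; apply. Qed.
Lemma subring0 : S 0. Proof. by rewrite -(subrr 1); apply: subringB; apply: subring1. Qed.
Lemma subringN a : S a -> S (- a).
Proof. by move=> Sa; rewrite -sub0r; apply: subringB => //; apply: subring0. Qed.
Lemma subringD a b : S a -> S b -> S (a + b).
Proof. by move=> Sa Sb; rewrite -(opprK b); apply: subringB => //; apply: subringN. Qed.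
Lemma subringX a k : S a -> S (a ^+ k).
Proof.
move=> Sa; elim: k => [|k IH]; first by rewrite expr0; apply: subring1.
by rewrite exprS; apply: subringM.
Qed.
Lemma subring_sum (I : Type) (r : seq I) (P : pred I) (F : I -> A) :
  (forall i, P i -> S (F i)) -> S (\sum_(i <- r | P i) F i).
Proof. by move=> SF; apply: big_ind => //; [apply: subring0 | apply: subringD]. Qed.
End Subring.

Section LeftSpan.
Variable A : pzRingType.
Implicit Types (B X : A -> Prop) (a b c g : A).

Lemma lspan0 B X : lspan B X 0.
Proof. by exists [::]; split => //; rewrite /lcomb big_nil. Qed.

Lemma lcomb_cat (l1 l2 : seq (A * A)) : lcomb (l1 ++ l2) = lcomb l1 + lcomb l2.
Proof. exact: big_cat. Qed.

Lemma lspanD B X a b : lspan B X a -> lspan B X b -> lspan B X (a + b).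
Proof.
move=> [l1 [H1 ->]] [l2 [H2 ->]]; exists (l1 ++ l2); split; last by rewrite lcomb_cat.
by move=> p; rewrite mem_cat => /orP [] ?; [apply: H1 | apply: H2].
Qed.

Lemma lspanMl B B' X c a : (forall b, B b -> B' (c * b)) ->
  lspan B X a -> lspan B' X (c * a).
Proof.
move=> cBB' [l [Hl ->]]; exists (map (fun p => (c * p.1, p.2)) l); split.
  by move=> p /mapP [q /Hl [Bq Xq] ->]; split => //; apply: cBB'.
by rewrite /lcomb big_map mulr_sumr; apply: eq_bigr => p _; rewrite mulrA.
Qed.

Lemma lspanS B B' X X' a : (forall b, B b -> B' b) -> (forall b, X b -> X' b) ->
  lspan B X a -> lspan B' X' a.
Proof. by move=> BB' XX' [l [Hl ->]]; exists l; split => // p /Hl [] /BB' ? /XX'. Qed.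

Lemma lspan_ann_mul0 B R g a : lspan B (ann R g) a -> a * g = 0.
Proof.
move=> [l [Hl ->]]; rewrite /lcomb mulr_suml big1_seq // => p /Hl [_ [_ pg0]].
by rewrite -mulrA pg0 mulr0.
Qed.
End LeftSpan.

Definition nz_repr (A : pzRingType) (R T : A -> Prop) (l : seq (A * A)) :=
  (forall p, p \in l -> R p.1 /\ p.1 != 0 /\ T p.2) /\ uniq (map snd l).

Section FreeModule.
Variables (A : pzRingType) (R M T : A -> Prop).
Hypotheses (sR : subring R) (freeRT : free_on R M T).

Lemma free_basis_sub t : T t -> M t. Proof. by case: freeRT => TM _; apply: TM. Qed.

Lemma free_lcomb_eq0 l : (forall p, p \in l -> R p.1 /\ T p.2) -> uniq (map snd l) ->
  lcomb l = 0 -> forall p, p \in l -> p.1 = 0.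
Proof. by case: freeRT => _ [_]; apply. Qed.

Lemma free_repr_nz m : M m -> exists l, nz_repr R T l /\ m = lcomb l.
Proof.
case: freeRT => _ [repr _] /repr [l [Hl [Hu ->]]].
exists [seq p <- l | p.1 != 0]; split; first split.
- by move=> p; rewrite mem_filter => /andP [p0 /Hl []].
- by apply: subseq_uniq Hu; apply/map_subseq/filter_subseq.
rewrite /lcomb big_filter [RHS]big_mkcond; apply: eq_bigr => p _.
by case: eqP => // ->; rewrite mul0r.
Qed.

Lemma free_basis_neq0 t : (1 : A) != 0 -> T t -> t != 0.
Proof.
move=> oner0 Tt; apply/eqP => t0.
suff: (1 : A) = 0 by move/eqP; rewrite (negbTE oner0).
apply: (@free_lcomb_eq0 [:: (1, t)] _ _ _ (1, t) (mem_head _ _)) => //.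
- by move=> p; rewrite inE => /eqP ->; split => //; apply: subring1.
- by rewrite /lcomb big_seq1 t0 mulr0.
Qed.

Lemma free_ann_coef l r : nz_repr R T l -> R r -> r * lcomb l = 0 ->
  forall p, p \in l -> r * p.1 = 0.
Proof.
move=> [Hl Hu] Rr rl0 p lp.
pose l' := map (fun p => (r * p.1, p.2)) l.
apply: (@free_lcomb_eq0 l' _ _ _ (r * p.1, p.2)); last by apply/mapP; exists p.
- by move=> q /mapP [q0 /Hl [Rq0 [_ Tq0]] ->]; split => //; apply: subringM.
- by rewrite -map_comp.
- by rewrite -[RHS]rl0 /lcomb big_map mulr_sumr; apply: eq_bigr => i _; rewrite mulrA.
Qed.

Definition coef_at (l : seq (A * A)) (t : A) := \sum_(p <- l | p.2 == t) p.1.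

Lemma coef_at_mem l p : uniq (map snd l) -> p \in l -> coef_at l p.2 = p.1.
Proof.
elim: l => [|a l IH] //= /andP [a_l lu]; rewrite in_cons /coef_at big_cons.
have notin q : q \in l -> q.2 != a.2.
  by move=> ql; apply: contraNneq a_l => <-; apply: map_f.
case: (eqVneq p a) => [-> _ | pa /= pl].
  by rewrite eqxx big1_seq ?addr0 // => q /andP [/eqP qa /notin]; rewrite qa eqxx.
by rewrite eq_sym (negbTE (notin p pl)); apply: IH.
Qed.

Lemma coef_at_nmem l t : t \notin map snd l -> coef_at l t = 0.
Proof.
move=> tl; rewrite /coef_at big1_seq // => q /andP [/eqP qt /(map_f snd)].
by rewrite qt (negbTE tl).
Qed.

Lemma coef_atR l t : (forall p, p \in l -> R p.1) -> R (coef_at l t).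
Proof. by move=> Hl; rewrite /coef_at big_seq_cond; apply: subring_sum => // i /andP [/Hl]. Qed.

Lemma coef_at_sum l (U : seq A) : uniq U -> {subset map snd l <= U} ->
  \sum_(t <- U) coef_at l t * t = lcomb l.
Proof.
move=> Uu lU; rewrite /coef_at /lcomb.
under eq_bigr => t _ do rewrite mulr_suml (eq_bigr (fun p => p.1 * p.2)) => [|p /eqP ->] //.
rewrite (exchange_big_dep predT) //=; apply: eq_big_seq => p lp.
rewrite -big_filter (@eq_filter _ _ (pred1 p.2)) => [|t]; last by rewrite /= eq_sym.
by rewrite filter_pred1_uniq ?big_seq1 //; apply/lU/map_f.
Qed.

Lemma free_repr_uniq l1 l2 : nz_repr R T l1 -> nz_repr R T l2 ->
  lcomb l1 = lcomb l2 -> {subset l2 <= l1}.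
Proof.
move=> [H1 U1] [H2 U2] l12 p l2p.
pose U := undup (map snd (l1 ++ l2)).
pose L := map (fun t => (coef_at l1 t - coef_at l2 t, t)) U.
have inU q : q \in l1 ++ l2 -> q.2 \in U by move=> q12; rewrite mem_undup map_f.
have HL q : q \in L -> R q.1 /\ T q.2.
  move=> /mapP [t]; rewrite mem_undup => /mapP [q' l12q' ->] -> /=.
  split.
    by apply: subringB => //; [apply: coef_atR => ? /H1 [] | apply: coef_atR => ? /H2 []].
  by move: l12q'; rewrite mem_cat => /orP [/H1 | /H2] [_ []].
have L0 : lcomb L = 0.
  rewrite /lcomb big_map; under eq_bigr => t _ do rewrite mulrBl.
  by rewrite sumrB !coef_at_sum ?undup_uniq ?l12 ?subrr // => _ /mapP [q lq ->];
    apply: inU; rewrite mem_cat lq ?orbT.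
have /eqP : coef_at l1 p.2 - coef_at l2 p.2 = 0.
  apply: (@free_lcomb_eq0 L HL _ L0 (coef_at l1 p.2 - coef_at l2 p.2, p.2)).
    by rewrite -map_comp map_id undup_uniq.
  by apply/map_f/inU; rewrite mem_cat l2p orbT.
rewrite subr_eq0 (coef_at_mem U2 l2p).
case: (boolP (p.2 \in map snd l1)) => [/mapP [q l1q pq] | /coef_at_nmem ->].
  rewrite pq (coef_at_mem U1 l1q) => /eqP qp.
  by rewrite [p]surjective_pairing -qp pq -surjective_pairing.
by rewrite eq_sym; have [_ [/negbTE ->]] := H2 _ l2p.
Qed.

Lemma nice_coef_ann g l a b : nice R T g -> nz_repr R T l -> g = lcomb l ->
  a \in map fst l -> b \in map fst l -> same_set (ann R a) (ann R b).
Proof.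
case=> _ gnice [Hl Hu] gl /mapP [pa la ->] /mapP [pb lb ->].
exact: gnice Hl Hu gl _ _ la lb.
Qed.

Lemma nice_subcomb g l p lp : nice R T g -> nz_repr R T l -> g = lcomb l ->
  nz_repr R T lp -> p = lcomb lp -> p != 0 -> {subset map fst lp <= map fst l} ->
  nice R T p /\ (forall r, ann R p r -> ann R g r).
Proof.
move=> gnice rl gl rlp plp p0 lpl; split.
  split=> // l' Hl' Hu' pl' a b la lb.
  have l'lp : {subset l' <= lp} by apply: free_repr_uniq => //; rewrite -plp -pl'.
  by apply: (nice_coef_ann gnice rl gl); apply/lpl/map_f/l'lp.
have [a lpa] : exists a, a \in lp.
  case: lp plp {rlp lpl} => [|a ?]; last by exists a; rewrite mem_head.
  by rewrite /lcomb big_nil => p00; rewrite p00 eqxx in p0.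
move=> r [Rr rp0]; split=> //.
have ra0 := free_ann_coef rlp Rr (etrans (congr1 _ (esym plp)) rp0) lpa.
rewrite gl /lcomb mulr_sumr big1_seq // => q /andP [_ lq].
have [_ rq] := (nice_coef_ann gnice rl gl (lpl _ (map_f fst lpa)) (map_f fst lq) r).1 (conj Rr ra0).
by rewrite mulrA rq mul0r.
Qed.
End FreeModule.

Section OreExtension.
Variables (A : pzRingType) (S E : A -> Prop) (x : A) (alpha delta : A -> A).
Hypothesis ore : is_ore_ext S E x alpha delta.

Local Ltac ore_split := case: ore => sS [sE [SE [Ex [aS [aD [aM [_ [ainj [asurj
  [dS [_ [_ [comm [expand coef0]]]]]]]]]]]]]].

Lemma ore_subringS : subring S. Proof. by ore_split. Qed.
Lemma ore_subringE : subring E. Proof. by ore_split. Qed.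
Lemma ore_sub s : S s -> E s. Proof. by ore_split; apply: SE. Qed.
Lemma ore_var : E x. Proof. by ore_split. Qed.
Lemma ore_alphaS s : S s -> S (alpha s). Proof. by ore_split; apply: aS. Qed.
Lemma ore_alphaD a b : S a -> S b -> alpha (a + b) = alpha a + alpha b.
Proof. by ore_split; apply: aD. Qed.
Lemma ore_alphaM a b : S a -> S b -> alpha (a * b) = alpha a * alpha b.
Proof. by ore_split; apply: aM. Qed.
Lemma ore_alpha_inj a b : S a -> S b -> alpha a = alpha b -> a = b.
Proof. by ore_split; apply: ainj. Qed.
Lemma ore_alpha_surj b : S b -> exists2 a, S a & alpha a = b.
Proof. by ore_split => /asurj [a []]; exists a. Qed.
Lemma ore_deltaS s : S s -> S (delta s). Proof. by ore_split; apply: dS. Qed.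
Lemma ore_mulx s : S s -> x * s = alpha s * x + delta s.
Proof. by ore_split; apply: comm. Qed.
Lemma ore_expand f : E f -> exists (N : nat) (q : nat -> A),
  (forall k, S (q k)) /\ f = \sum_(k < N) q k * x ^+ k.
Proof. by ore_split; apply: expand. Qed.
Lemma ore_coef_eq0 (N : nat) (q : nat -> A) : (forall k, S (q k)) ->
  \sum_(k < N) q k * x ^+ k = 0 -> forall k, (k < N)%N -> q k = 0.
Proof. by ore_split; apply: coef0. Qed.

Lemma ore_alpha0 : alpha 0 = 0.
Proof.
have S0 := subring0 ore_subringS.
have := ore_alphaD S0 S0; rewrite addr0 => /(congr1 (fun y => y - alpha 0)).
by rewrite subrr addrK => <-.
Qed.

Lemma iter_alphaS k s : S s -> S (iter k alpha s).
Proof. by move=> Ss; elim: k => //= k IH; apply: ore_alphaS. Qed.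
Lemma iter_alphaM k a b : S a -> S b -> iter k alpha (a * b) = iter k alpha a * iter k alpha b.
Proof. by move=> Sa Sb; elim: k => //= k ->; rewrite ore_alphaM //; apply: iter_alphaS. Qed.
Lemma iter_alpha0 k : iter k alpha 0 = 0.
Proof. by elim: k => //= k ->; rewrite ore_alpha0. Qed.
Lemma iter_alpha_inj k a b : S a -> S b -> iter k alpha a = iter k alpha b -> a = b.
Proof.
move=> Sa Sb; elim: k => //= k IH /ore_alpha_inj eqab; apply/IH/eqab; exact: iter_alphaS.
Qed.
Lemma iter_alpha_surj k b : S b -> exists2 a, S a & iter k alpha a = b.
Proof.
elim: k b => [|k IH] b Sb; first by exists b.
have [a Sa <-] := ore_alpha_surj Sb; have [a' Sa' <-] := IH a Sa.
by exists a'; rewrite // iterSr.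
Qed.

Lemma sum_monomial N j t : (j < N)%N ->
  \sum_(k < N) (if (k : nat) == j then t else 0) * x ^+ k = t * x ^+ j.
Proof.
move=> jN; rewrite (bigD1 (Ordinal jN)) //= eqxx big1 ?addr0 // => i /negbTE ij.
by rewrite -val_eqE /= in ij; rewrite ij mul0r.
Qed.

Lemma monomial_inj t1 t2 k1 k2 : S t1 -> S t2 -> t1 != 0 ->
  t1 * x ^+ k1 = t2 * x ^+ k2 -> k1 = k2 /\ t1 = t2.
Proof.
move=> St1 St2 t1_0 eq12.
pose q k := (if k == k1 then t1 else 0) - (if k == k2 then t2 else 0).
have Sq k : S (q k).
  by apply: (subringB ore_subringS); case: ifP => _ //; apply: (subring0 ore_subringS).
have k1N : (k1 < (maxn k1 k2).+1)%N by rewrite ltnS leq_maxl.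
have k2N : (k2 < (maxn k1 k2).+1)%N by rewrite ltnS leq_maxr.
have sum0 : \sum_(k < (maxn k1 k2).+1) q k * x ^+ k = 0.
  by under eq_bigr do rewrite mulrBl; rewrite sumrB !sum_monomial // eq12 subrr.
have := ore_coef_eq0 Sq sum0 k1N; rewrite /q eqxx; case: eqP => [-> /eqP | _].
  by rewrite subr_eq0 => /eqP.
by rewrite subr0 => t10; rewrite t10 eqxx in t1_0.
Qed.

Definition deg_lt (N : nat) (h : A) :=
  exists2 q : nat -> A, (forall k, S (q k)) & h = \sum_(k < N) q k * x ^+ k.

Lemma deg_lt0 N : deg_lt N 0.
Proof.
exists (fun=> 0) => [k|]; first exact: subring0 ore_subringS.
by rewrite big1 // => i _; rewrite mul0r.
Qed.

Lemma deg_ltD N a b : deg_lt N a -> deg_lt N b -> deg_lt N (a + b).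
Proof.
move=> [qa Sqa ->] [qb Sqb ->]; exists (fun k => qa k + qb k).
  by move=> k; apply: (subringD ore_subringS).
by rewrite -big_split; apply: eq_bigr => i _; rewrite mulrDl.
Qed.

Lemma deg_ltB N a b : deg_lt N a -> deg_lt N b -> deg_lt N (a - b).
Proof.
move=> [qa Sqa ->] [qb Sqb ->]; exists (fun k => qa k - qb k).
  by move=> k; apply: (subringB ore_subringS).
by rewrite -sumrB; apply: eq_bigr => i _; rewrite mulrBl.
Qed.

Lemma deg_lt_sum N (I : Type) (r : seq I) (P : pred I) (F : I -> A) :
  (forall i, P i -> deg_lt N (F i)) -> deg_lt N (\sum_(i <- r | P i) F i).
Proof. by move=> NF; apply: big_ind => //; [apply: deg_lt0 | apply: deg_ltD]. Qed.

Lemma deg_lt_monomial N c k : S c -> (k < N)%N -> deg_lt N (c * x ^+ k).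
Proof.
move=> Sc kN; exists (fun i => if i == k then c else 0); last by rewrite sum_monomial.
by move=> i; case: ifP => // _; apply: (subring0 ore_subringS).
Qed.

Lemma deg_lt_widen N M h : (N <= M)%N -> deg_lt N h -> deg_lt M h.
Proof.
move=> NM [q Sq ->]; apply: deg_lt_sum => i _; apply: deg_lt_monomial => //.
exact: leq_trans (ltn_ord i) NM.
Qed.

Lemma deg_ltMl N s h : S s -> deg_lt N h -> deg_lt N (s * h).
Proof.
move=> Ss [q Sq ->]; rewrite mulr_sumr; apply: deg_lt_sum => i _; rewrite mulrA.
by apply: deg_lt_monomial => //; apply: (subringM ore_subringS).
Qed.

Lemma deg_ltMXr N j h : deg_lt N h -> deg_lt (N + j) (h * x ^+ j).
Proof.
move=> [q Sq ->]; rewrite mulr_suml; apply: deg_lt_sum => i _; rewrite -mulrA -exprD.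
by apply: deg_lt_monomial => //; rewrite ltn_add2r.
Qed.

Lemma deg_ltMxl N h : deg_lt N h -> deg_lt N.+1 (x * h).
Proof.
move=> [q Sq ->]; rewrite mulr_sumr; apply: deg_lt_sum => i _.
rewrite mulrA ore_mulx // mulrDl -mulrA -exprS.
apply: deg_ltD; apply: deg_lt_monomial.
- exact: ore_alphaS.
- by rewrite ltnS.
- exact: ore_deltaS.
- by rewrite ltnS ltnW.
Qed.

Lemma deg_ltMXl m N h : deg_lt N h -> deg_lt (N + m) (x ^+ m * h).
Proof.
move=> Nh; elim: m => [|m IH]; first by rewrite addn0 expr0 mul1r.
by rewrite exprS -mulrA addnS; apply: deg_ltMxl.
Qed.

Lemma deg_lt_split m f : deg_lt m.+1 f ->
  exists F c, [/\ deg_lt m F, S c & f = F + c * x ^+ m].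
Proof.
move=> [q Sq ->]; exists (\sum_(k < m) q k * x ^+ k), (q m).
by split; [exists q | | rewrite big_ord_recr].
Qed.

Lemma expx_mul k s : S s ->
  exists2 L, deg_lt k L & x ^+ k * s = iter k alpha s * x ^+ k + L.
Proof.
move=> Ss; elim: k => [|k [L Lk xs]].
  by exists 0; [apply: deg_lt0 | rewrite expr0 mul1r mulr1 addr0].
have Sak := iter_alphaS k Ss.
exists (delta (iter k alpha s) * x ^+ k + x * L).
  by apply: deg_ltD; [apply: deg_lt_monomial => //; apply: ore_deltaS | apply: deg_ltMxl].
by rewrite exprS -mulrA xs mulrDr mulrA ore_mulx // mulrDl -mulrA addrA.
Qed.

Lemma monomial_addr_eq0 M c L : S c -> deg_lt M L -> c * x ^+ M + L = 0 -> c = 0.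
Proof.
move=> Sc [q Sq ->] sum0.
pose q' k := if (k < M)%N then q k else c.
have Sq' k : S (q' k) by rewrite /q'; case: ifP.
have := @ore_coef_eq0 M.+1 q' Sq' _ M (ltnSn M); rewrite /q' ltnn; apply.
rewrite big_ord_recr /= ltnn -[RHS]sum0 addrC; congr (_ + _).
by apply: eq_bigr => i _; rewrite ltn_ord.
Qed.

Lemma ore_lead_expand g : E g -> g != 0 ->
  exists n p G0, [/\ S p, p != 0, deg_lt n G0 & g = G0 + p * x ^+ n].
Proof.
move=> /ore_expand [N [q [Sq def_g]]].
have : deg_lt N g by exists q.
elim: N {q Sq def_g} g => [|N IH] g; first by move=> [q _ ->]; rewrite big_ord0 eqxx.
move=> /deg_lt_split [F [c [FN Sc ->]]] g0.
have [c0 | c0] := eqVneq c 0; last by exists N, c, F.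
by apply: IH; rewrite c0 mul0r addr0 in g0 *.
Qed.

Section LeadingCoefficient.
Variables (g p G0 : A) (n : nat).
Hypotheses (Sp : S p) (G0n : deg_lt n G0) (def_g : g = G0 + p * x ^+ n).

Lemma monomial_mul_lead c m : S c -> exists2 L, deg_lt (m + n) L &
  c * x ^+ m * g = c * iter m alpha p * x ^+ (m + n) + L.
Proof.
move=> Sc; have [L Lm xs] := expx_mul m Sp.
exists (c * (x ^+ m * G0) + c * (L * x ^+ n)).
  by apply: deg_ltD; apply: deg_ltMl => //; [rewrite addnC; apply: deg_ltMXl | apply: deg_ltMXr].
transitivity (c * (x ^+ m * G0) + c * ((x ^+ m * p) * x ^+ n)).
  by rewrite def_g mulrDr !mulrA.
by rewrite xs mulrDl mulrDr addrCA -mulrA -exprD !mulrA.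
Qed.

Lemma deg_lt_mulr m F : deg_lt m F -> deg_lt (m + n) (F * g).
Proof.
move=> [q Sq ->]; rewrite mulr_suml; apply: deg_lt_sum => i _.
have [L Li ->] := monomial_mul_lead i (Sq i).
apply: deg_ltD; last by apply: deg_lt_widen Li; rewrite leq_add2r ltnW.
apply: deg_lt_monomial; last by rewrite ltn_add2r.
by apply: (subringM ore_subringS) => //; apply: iter_alphaS.
Qed.

Lemma lead_ann m F c : deg_lt m F -> S c -> (F + c * x ^+ m) * g = 0 ->
  c * iter m alpha p = 0.
Proof.
move=> Fm Sc fg0; have [L Lmn cg] := monomial_mul_lead m Sc.
apply: (monomial_addr_eq0 _ (deg_ltD Lmn (deg_lt_mulr Fm))).
  by apply: (subringM ore_subringS) => //; apply: iter_alphaS.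
by rewrite addrA -cg addrC -mulrDl.
Qed.

Variable R : A -> Prop.
Hypothesis lead_ann_lspan : forall s, S s -> s * p = 0 -> lspan S (ann R g) s.

Theorem ore_ann_lspan f : E f -> f * g = 0 -> lspan E (ann R g) f.
Proof.
move=> /ore_expand [N [q [Sq def_f]]].
have : deg_lt N f by exists q.
elim: N {q Sq def_f} f => [|m IH] f; first by move=> [q _ ->] _; rewrite big_ord0; apply: lspan0.
move=> /deg_lt_split [F [c [Fm Sc ->]]] fg0.
have [s Ss cs] := iter_alpha_surj m Sc.
have sp0 : s * p = 0.
  apply: (@iter_alpha_inj m); [exact: (subringM ore_subringS) | exact: (subring0 ore_subringS) |].
  by rewrite iter_alphaM // cs iter_alpha0 (lead_ann Fm Sc fg0).
have s_span := lead_ann_lspan Ss sp0.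
have [L Lm xs] := expx_mul m Ss.
have def_f : F + c * x ^+ m = (F - L) + x ^+ m * s.
  by rewrite xs cs addrCA subrK addrC.
rewrite def_f; apply: lspanD; last first.
  apply: lspanMl s_span => b Sb.
  apply: (subringM ore_subringE); last exact: ore_sub.
  by apply: (subringX ore_subringE); apply: ore_var.
apply: IH; first exact: deg_ltB.
rewrite -(addrK (x ^+ m * s) (F - L)) -def_f mulrBl fg0 -mulrA.
by rewrite (lspan_ann_mul0 s_span) mulr0 subr0.
Qed.

End LeadingCoefficient.
End OreExtension.

Section OreBasis.
Variables (A : pzRingType) (R T TS S E : A -> Prop) (x : A) (alpha delta : A -> A).
Hypotheses (sR : subring R) (freeT : free_on R (fun _ => True) T).
Hypotheses (freeS : free_on R S TS) (ore : is_ore_ext S E x alpha delta).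
Hypothesis TS_mulX : forall t k, TS t -> T (t * x ^+ k).

Definition shiftX k (l : seq (A * A)) := [seq (pr.1, pr.2 * x ^+ k) | pr <- l].

Lemma lcomb_shiftX k l : lcomb (shiftX k l) = lcomb l * x ^+ k.
Proof. by rewrite /lcomb big_map mulr_suml; apply: eq_bigr => pr _; rewrite mulrA. Qed.

Definition low_terms N (l : seq (A * A)) :=
  forall pr, pr \in l -> exists t k, [/\ TS t, (k < N)%N & pr.2 = t * x ^+ k].

Section NonTrivial.
Hypothesis oner_neq0 : (1 : A) != 0.

Lemma repr_cat_shiftX N lc l0 : nz_repr R TS lc -> nz_repr R T l0 -> low_terms N l0 ->
  nz_repr R T (shiftX N lc ++ l0) /\ low_terms N.+1 (shiftX N lc ++ l0).
Proof.
move=> [Hc Uc] [H0 U0] low0.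
have TSS := free_basis_sub freeS.
have TS0 := free_basis_neq0 sR freeS oner_neq0.
split; first split.
- move=> pr; rewrite mem_cat => /orP [/mapP [q /Hc [Rq [q0 TSq]] ->] | /H0] //.
  by split => //; split => //; apply: TS_mulX.
- rewrite map_cat cat_uniq U0 andbT -map_comp; apply/andP; split.
    rewrite (map_comp (fun t => t * x ^+ N) snd) map_inj_in_uniq // => t1 t2.
    move=> /mapP [q1 /Hc [_ [_ TS1]] ->] /mapP [q2 /Hc [_ [_ TS2]] ->].
    by move=> /(monomial_inj ore (TSS _ TS1) (TSS _ TS2) (TS0 _ TS1)) [].
  apply/hasPn => _ /mapP [q /low0 [t [k [TSt kN qt]]] ->]; rewrite qt.
  apply/negP => /mapP [q' /Hc [_ [_ TSq']] /esym].
  by move=> /(monomial_inj ore (TSS _ TSq') (TSS _ TSt) (TS0 _ TSq')) [Nk]; rewrite Nk ltnn in kN.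
- move=> pr; rewrite mem_cat => /orP [/mapP [q /Hc [_ [_ TSq]] ->] | /low0 [t [k [TSt kN ->]]]].
    by exists q.2, N.
  by exists t, k; split => //; rewrite ltnS ltnW.
Qed.

Lemma ore_deg_lt_repr N h : deg_lt S x N h ->
  exists l, [/\ nz_repr R T l, h = lcomb l & low_terms N l].
Proof.
elim: N h => [|N IH] h.
  by move=> [q _ ->]; exists [::]; rewrite /lcomb big_ord0 big_nil.
move=> /deg_lt_split [F [c [FN Sc ->]]].
have [l0 [r0 -> low0]] := IH F FN.
have [lc [rc ->]] := free_repr_nz freeS Sc.
have [rcat lowcat] := repr_cat_shiftX rc r0 low0.
by exists (shiftX N lc ++ l0); rewrite lcomb_cat lcomb_shiftX addrC.
Qed.
End NonTrivial.

Lemma nice_lead_coef g p G0 n : nice R T g -> S p -> p != 0 -> deg_lt S x n G0 ->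
  g = G0 + p * x ^+ n -> nice R T p /\ (forall r, ann R p r -> ann R g r).
Proof.
move=> gnice Sp p0 G0n def_g.
have oner0 : (1 : A) != 0 by apply: contraNneq p0 => oner0; rewrite -[p]mul1r oner0 mul0r.
have [l0 [r0 def_G0 low0]] := ore_deg_lt_repr oner0 G0n.
have [lp [[Hp Up] def_p]] := free_repr_nz freeS Sp.
have [rg _] := repr_cat_shiftX oner0 (conj Hp Up) r0 low0.
have TS_T t : TS t -> T t by move=> TSt; rewrite -[t]mulr1 -(expr0 x); apply: TS_mulX.
apply: (nice_subcomb sR freeT gnice rg _ _ def_p p0).
- by rewrite def_g lcomb_cat lcomb_shiftX def_G0 def_p addrC.
- by split => // pr /Hp [? [? /TS_T]].
- by move=> a a_lp; rewrite map_cat mem_cat -map_comp a_lp.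
Qed.

Hypothesis ann_lspan_base :
  forall p f, nice R T p -> S p -> S f -> f * p = 0 -> lspan S (ann R p) f.

Lemma ore_ann_lspan_nice g f : nice R T g -> E g -> E f -> f * g = 0 ->
  lspan E (ann R g) f.
Proof.
move=> gnice Eg; have [n [p [G0 [Sp p0 G0n def_g]]]] := ore_lead_expand ore Eg gnice.1.
have [pnice ann_pg] := nice_lead_coef gnice Sp p0 G0n def_g.
apply: (ore_ann_lspan ore Sp G0n def_g) => s Ss sp0.
by apply: lspanS (ann_lspan_base pnice Sp Ss sp0) => // r /ann_pg.
Qed.
End OreBasis.

Lemma sorted_cat_nseq (d : Order.disp_t) (I : orderType d) (l : seq I) (s : I) k :
  sorted <=%O l -> {in l, forall u, (u <= s)%O} -> sorted <=%O (l ++ nseq k s).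
Proof.
move=> sl ls; rewrite (sorted_pairwise le_trans) pairwise_cat -(sorted_pairwise le_trans) sl.
apply/and3P; split => //.
  by apply/allrelP => u v /ls us; rewrite mem_nseq => /andP [_ /eqP ->].
by elim: k => //= k ->; rewrite all_nseq lexx orbT.
Qed.

Section WellOrderedVariables.
Variables (d : Order.disp_t) (I : orderType d).
Hypothesis wf : well_founded (fun a b : I => (a < b)%O).
Variables (SS : pzRingType) (R : SS -> Prop) (xs : I -> SS).
Variables (Lt Le : I -> SS -> Prop) (alpha delta : I -> SS -> SS).
Hypothesis sR : subring R.
Hypothesis Lt_def : forall s h, Lt s h <-> R h \/ exists t, (t < s)%O /\ Le t h.
Hypothesis ore : forall s, is_ore_ext (Lt s) (Le s) (xs s) (alpha s) (delta s).
Hypothesis freeLt : forall s, free_on R (Lt s) (std_terms xs (fun t => (t < s)%O)).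
Hypothesis freeT : free_on R (fun _ => True) (std_terms xs (fun _ => True)).

Local Notation T := (std_terms xs (fun _ => True)).

Lemma Le_Lt a b h : (a < b)%O -> Le a h -> Lt b h.
Proof. by move=> ab Lah; apply/Lt_def; right; exists a. Qed.

Lemma R_Le u h : R h -> Le u h.
Proof. by move=> Rh; apply: (ore_sub (ore u)); apply/Lt_def; left. Qed.

Lemma Le_mono a b h : (a <= b)%O -> Le a h -> Le b h.
Proof.
rewrite le_eqVlt => /orP [/eqP -> // | ab] Lah.
by apply: (ore_sub (ore b)); apply: Le_Lt ab Lah.
Qed.

Lemma std_terms_mulX s t k : std_terms xs (fun u => (u < s)%O) t -> T (t * xs s ^+ k).
Proof.
move=> [l [sl [ls ->]]]; exists (l ++ nseq k s); split.
  by apply: sorted_cat_nseq => // u /ls /ltW.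
split => //; rewrite big_cat /=; congr (_ * _).
elim: k => [|k IH]; first by rewrite big_nil expr0.
by rewrite /= big_cons -IH exprS.
Qed.

Definition below (D : I -> Prop) h := R h \/ exists u, D u /\ Le u h.

Definition ann_lspan_at u := forall g f, nice R T g -> Le u g -> Le u f -> f * g = 0 ->
  lspan (Le u) (ann R g) f.

Lemma ann_lspan_below D p f : (forall u, D u -> ann_lspan_at u) -> nice R T p ->
  below D p -> below D f -> f * p = 0 -> lspan (below D) (ann R p) f.
Proof.
move=> Dann pnice Dp Df fp0.
have lift u : D u -> lspan (Le u) (ann R p) f -> lspan (below D) (ann R p) f.
  by move=> Du; apply: lspanS => // h Luh; right; exists u.
case: Dp => [Rp | [u1 [D1 L1]]]; case: Df => [Rf | [u2 [D2 L2]]].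
- exists [:: (1, f)]; split; last by rewrite /lcomb big_seq1 mul1r.
  by move=> q; rewrite inE => /eqP -> /=; split; [left; apply: subring1 | split].
- by apply: (lift u2 D2); apply: Dann => //; apply: R_Le.
- by apply: (lift u1 D1); apply: Dann => //; apply: R_Le.
case: (leP u1 u2) => u12.
  by apply: (lift u2 D2); apply: Dann => //; apply: Le_mono u12 L1.
by apply: (lift u1 D1); apply: Dann => //; apply: Le_mono (ltW u12) L2.
Qed.

Lemma ann_lspan_all u : ann_lspan_at u.
Proof.
elim/(well_founded_ind wf): u => u IH g f.
apply: (ore_ann_lspan_nice sR freeT (freeLt u) (ore u) (@std_terms_mulX u)).
move=> p h pnice /Lt_def Lp /Lt_def Lh hp0.
by apply: lspanS (ann_lspan_below IH pnice Lp Lh hp0) => // h' /Lt_def.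
Qed.

Hypothesis Le_all : forall h, R h \/ exists t, Le t h.

Theorem ann_nice_lspan g : nice R T g ->
  same_set (ann (fun _ => True) g) (lspan (fun _ => True) (ann R g)).
Proof.
have below_all h : below (fun _ => True) h by case: (Le_all h) => [|[u]]; [left | right; exists u].
move=> gnice h; split => [[_ hg0] | /lspan_ann_mul0 //].
have all_at u : True -> ann_lspan_at u by move=> _; apply: ann_lspan_all.
by apply: lspanS (ann_lspan_below all_at gnice (below_all g) (below_all h) hg0).
Qed.
End WellOrderedVariables.

Theorem mainTheorem10 :
  (* (1) *)
  (forall (A : pzRingType) (R S TS : A -> Prop) (x : A) (alpha delta : A -> A),
     subring R -> (forall r, R r -> S r) -> free_on R S TS ->
     is_ore_ext S (fun _ => True) x alpha delta ->
     forall g p : A, g != 0 -> is_lc S x g p ->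
       nice R TS p ->
       same_set (ann R p) (ann R g) ->
       same_set (ann S p) (lspan S (ann R p)) ->
       same_set (ann (fun _ => True) g) (lspan (fun _ => True) (ann R g)))
  /\
  (* (2) *)
  (forall (d : Order.disp_t) (I : orderType d),
     well_founded (fun a b : I => (a < b)%O) ->
     forall (SS : pzRingType) (R : SS -> Prop) (xs : I -> SS)
            (Lt Le : I -> SS -> Prop) (alpha delta : I -> SS -> SS),
     subring R ->
     (* S_s = R ∪ ⋃_{t<s} S_{t+1}  (S_0 = R, successor, limit) *)
     (forall s h, Lt s h <-> R h \/ exists t, (t < s)%O /\ Le t h) ->
     (* S_Omega = whole ring *)
     (forall h, R h \/ exists t, Le t h) ->
     (* S_{s+1} = S_s[x_s; alpha_s, delta_s] *)
     (forall s, is_ore_ext (Lt s) (Le s) (xs s) (alpha s) (delta s)) ->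
     (* S_kappa free left R-module on T_kappa *)
     (forall s, free_on R (Lt s) (std_terms xs (fun t => (t < s)%O))) ->
     (forall s, free_on R (Le s) (std_terms xs (fun t => (t <= s)%O))) ->
     free_on R (fun _ => True) (std_terms xs (fun _ => True)) ->
     forall g : SS, nice R (std_terms xs (fun _ => True)) g ->
       same_set (ann (fun _ => True) g) (lspan (fun _ => True) (ann R g))).
Proof.
split.
- move=> A R S TS x alpha delta _ _ _ ore g p _ [n [q [Sq [def_g [_ ->]]]]] _ ann_pg ann_p h.
  split => [[_ hg0] | /lspan_ann_mul0 //].
  apply: (ore_ann_lspan ore (Sq n) (G0 := \sum_(k < n) q k * x ^+ k)) => //.
  + by exists q.
  + by rewrite def_g big_ord_recr.
  + move=> s Ss sq0; apply: lspanS (proj1 (ann_p s) (conj Ss sq0)) => // r.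
    exact: (ann_pg r).1.
- move=> d I wf SS R xs Lt Le alpha delta sR Lt_def Le_all ore freeLt _ freeT.
  exact: ann_nice_lspan.
Qed.
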